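(* Let $\mathcal D$ be a distribution over $\mathcal X\times\{A,B\}\times\{0,1\}$, $\alpha\in[0,1)$, $\mathcal Q$ any distribution over $\mathcal X\times\{A,B\}\times\{0,1\}$, and $\widetilde{\mathcal D}=(1-\alpha)\mathcal D+\alpha\mathcal Q$. Let $h$ be a fixed hypothesis in a hypothesis class $\mathcal H$ of group-aware hypotheses $\mathcal X\times\{A,B\}\to\{0,1\}$, and fix a group $A$ with $r_A^+:=\Pr_{\mathcal D}[y=1\wedge x\in A]>0$. Then $$\big|\mathrm{TPR}_A(h,\widetilde{\mathcal D})-\mathrm{TPR}_A(h,\mathcal D)\big|\le\frac{\alpha}{(1-\alpha)r_A^++\alpha},$$ where $\mathrm{TPR}_A(h,\mathcal D')=\Pr_{\mathcal D'}[h(x)=1\mid y=1,\ x\in A]$.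
   Context: Examples are triples (features $x$, group in $\{A,B\}$, label $y$); $\widetilde{\mathcal D}$ models malicious noise in which an $\alpha$ fraction of samples comes from an adversarial distribution $\mathcal Q$. *)

From mathcomp Require Import all_boot all_order all_algebra.
From mathcomp Require Import all_classical all_reals all_analysis.
Set Implicit Arguments. Unset Strict Implicit. Unset Printing Implicit Defensive.
Import Order.TTheory GRing.Theory Num.Theory.
Local Open Scope classical_set_scope.
Local Open Scope ring_scope.

(* Examples are triples ((x, g), y) : X * bool * bool.
   Group encoding: g = true stands for group A, g = false for group B.
   Label y : bool, true = 1, false = 0. *)

Definition pos_event (X : Type) (g : bool) : set (X * bool * bool) :=
  [set z | (z.1.2 == g) && z.2].

Definition tp_event (X : Type) (h : X -> bool -> bool) (g : bool)
  : set (X * bool * bool) :=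
  [set z | [&& h z.1.1 z.1.2, z.1.2 == g & z.2]].

Definition TPR (d : measure_display) (X : measurableType d) (R : realType)
  (P : probability (X * bool * bool)%type R) (h : X -> bool -> bool) (g : bool) : R :=
  fine (P (tp_event h g)) / fine (P (pos_event g)).

From mathcomp Require Import all_boot all_order all_algebra.
From mathcomp Require Import all_classical all_reals all_analysis.
From mathcomp Require Import ring lra.
Set Implicit Arguments.
Unset Strict Implicit.
Unset Printing Implicit Defensive.
Import Order.TTheory GRing.Theory Num.Theory.
Local Open Scope classical_set_scope.
Local Open Scope ring_scope.

(* Write t = D[tp], p = D[pos] and s, q for the same events under Q.  Since
   measures are linear in the distribution, TPR_A under the mixture is the ratio
   ((1-a) t + a s) / ((1-a) p + a q).  Its distance to t / p equals
   a |p s - t q| / (p ((1-a) p + a q)) <= a q / ((1-a) p + a q), because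
   0 <= t <= p and 0 <= s <= q; this is increasing in q <= 1, hence at most
   a / ((1-a) p + a). *)

Section MixtureRatio.
Variable R : realFieldType.

Lemma mixture_ratio_subE (a p t q s : R) :
  0 < p -> 0 < (1 - a) * p + a * q ->
  ((1 - a) * t + a * s) / ((1 - a) * p + a * q) - t / p =
    a * (p * s - t * q) / (p * ((1 - a) * p + a * q)).
Proof. by move=> p0 m0; field; rewrite !gt_eqF. Qed.

Lemma norm_cross_sub_le (p t q s : R) :
  0 <= t <= p -> 0 <= s <= q -> `|p * s - t * q| <= p * q.
Proof.
move=> /andP[t0 tp] /andP[s0 sq].
have ts : t * s <= p * s by rewrite ler_wpM2r.
have tq : t * s <= t * q by rewrite ler_wpM2l.
by rewrite ler_norml; apply/andP; split; nra.
Qed.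

Lemma ratio_le_ratio1 (a c q : R) :
  0 <= a -> 0 < c -> 0 <= q <= 1 -> a * q / (c + a * q) <= a / (c + a).
Proof.
move=> a0 c0 /andP[q0 q1].
have cq0 : 0 < c + a * q by rewrite ltr_wpDr ?mulr_ge0.
have ca0 : 0 < c + a by rewrite ltr_wpDr.
rewrite ler_pdivrMr // mulrAC ler_pdivlMr //.
have acq : a * c * q <= a * c := ler_piMr (mulr_ge0 a0 (ltW c0)) q1.
nra.
Qed.

Lemma mixture_ratio_dist (a p t q s : R) :
  0 <= a < 1 -> 0 < p -> 0 <= t <= p -> 0 <= s <= q -> q <= 1 ->
  `| ((1 - a) * t + a * s) / ((1 - a) * p + a * q) - t / p | <=
    a / ((1 - a) * p + a).
Proof.
move=> /andP[a0 a1] p0 tp sq q1.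
have q0 : 0 <= q by case/andP: sq; apply: le_trans.
have c0 : 0 < (1 - a) * p by rewrite mulr_gt0 // subr_gt0.
have m0 : 0 < (1 - a) * p + a * q by rewrite ltr_wpDr ?mulr_ge0.
rewrite mixture_ratio_subE // normrM normfV normrM (ger0_norm a0).
rewrite (gtr0_norm (mulr_gt0 p0 m0)).
have q01 : 0 <= q <= 1 by rewrite q0.
apply: (le_trans _ (ratio_le_ratio1 a0 c0 q01)).
have -> : a * q / ((1 - a) * p + a * q) = a * (p * q) / (p * ((1 - a) * p + a * q)).
  by field; rewrite !gt_eqF.
apply: ler_wpM2r; first by rewrite invr_ge0 ltW ?mulr_gt0.
by apply: (ler_wpM2l a0); apply: norm_cross_sub_le.
Qed.

End MixtureRatio.

Section Events.
Variables (d : measure_display) (X : measurableType d).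

Lemma measurable_pos_event (g : bool) : measurable (@pos_event X g).
Proof.
have -> : pos_event g = [set: X] `*` [set g] `*` [set true].
  apply/funext => -[[x b] y] /=; apply/propext; rewrite /pos_event /=.
  by split=> [/andP[/eqP -> ->]|[[_ ->] ->]] //; rewrite eqxx.
by apply: measurableX => //; apply: measurableX.
Qed.

Lemma measurable_tp_event (h : X -> bool -> bool) (g : bool) :
  measurable_fun setT (fun xg : X * bool => h xg.1 xg.2) ->
  measurable (tp_event h g).
Proof.
move=> mh.
have -> : tp_event h g =
    ((fun xg : X * bool => h xg.1 xg.2) @^-1` [set true] `&` [set: X] `*` [set g])
    `*` [set true].
  apply/funext => -[[x b] y]; apply/propext; rewrite /tp_event /=.
  by split=> [/and3P[-> /eqP -> ->]|[[-> [_ ->]] ->]] //; rewrite eqxx.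
apply: measurableX => //; apply: measurableI; last exact: measurableX.
by rewrite -[_ @^-1` _]setTI; exact: mh.
Qed.

Lemma tp_event_sub_pos_event (h : X -> bool -> bool) (g : bool) :
  tp_event h g `<=` pos_event g.
Proof. by move=> [[x b] y] /and3P[_ ? ?]; apply/andP. Qed.

End Events.

Section Probability.
Variables (d : measure_display) (T : measurableType d) (R : realType).
Implicit Types (P : probability T R) (A B : set T).

Lemma probability_fineK P A : measurable A -> (fine (P A))%:E = P A.
Proof. by move=> mA; rewrite fineK // fin_num_measure. Qed.

Lemma fine_probability_le1 P A : measurable A -> fine (P A) <= 1.
Proof. by move=> mA; rewrite -lee_fin probability_fineK // probability_le1. Qed.

Lemma fine_probability_le P A B : measurable A -> measurable B -> A `<=` B ->
  fine (P A) <= fine (P B).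
Proof.
move=> mA mB AB; rewrite -lee_fin !probability_fineK //.
by apply: le_measure; rewrite ?inE.
Qed.

Lemma fine_mixture (a : R) (Pt P Q : probability T R) A :
  (forall E, measurable E -> Pt E = ((1 - a)%:E * P E + a%:E * Q E)%E) ->
  measurable A -> fine (Pt A) = (1 - a) * fine (P A) + a * fine (Q A).
Proof.
move=> Pt_mix mA; rewrite Pt_mix //.
by rewrite -(probability_fineK P mA) -(probability_fineK Q mA).
Qed.

End Probability.

Theorem mainTheorem6 (d : measure_display) (X : measurableType d) (R : realType)
  (D Q Dt : probability (X * bool * bool)%type R) (alpha : R)
  (H : set (X -> bool -> bool)) (h : X -> bool -> bool) (g : bool) :
  0 <= alpha -> alpha < 1 ->
  (forall E, measurable E ->
     Dt E = ((1 - alpha)%:E * D E + alpha%:E * Q E)%E) ->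
  h \in H ->
  measurable_fun setT (fun xg : X * bool => h xg.1 xg.2) ->
  0 < fine (D (pos_event g)) ->
  `| TPR Dt h g - TPR D h g | <=
    alpha / ((1 - alpha) * fine (D (pos_event g)) + alpha).
Proof.
move=> a0 a1 Dt_mix _ mh p0.
have mpos : measurable (@pos_event X g) := measurable_pos_event g.
have mtp := measurable_tp_event g mh.
have tp_le_pos (P : probability _ R) : fine (P (tp_event h g)) <= fine (P (pos_event g)).
  by apply: fine_probability_le => //; exact: tp_event_sub_pos_event.
rewrite /TPR !(fine_mixture Dt_mix) //.
by apply: mixture_ratio_dist; rewrite ?a0 ?a1 ?fine_ge0 ?tp_le_pos ?fine_probability_le1.
Qed.
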